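(* For $a,b\in\mathbb{C}$ let $\mathfrak{g}_{a,b}$ be the Lie algebra with basis $\{L_i,W_i: i\in\mathbb{Z}\}$ and brackets $[L_m,L_n]=(m-n)L_{m+n}$, $[W_m,W_n]=0$, $[L_m,W_n]=((m+1)(a-1)-(n+1))W_{m+n}+bW_{m+n+1}$ (so $[W_n,L_m]=-[L_m,W_n]$). Each of the following bilinear products $\circ$ (given on basis elements, for all $m,n\in\mathbb{Z}$) is a compatible left-symmetric algebra structure on the indicated Lie algebra. On $\mathfrak{g}_{a,b}$ for all $a,b\in\mathbb{C}$: (1) $L_m\circ L_n=cL_{m+n+1}-(n+1)L_{m+n}$, $L_m\circ W_n=((a-1)(m+1)-(n+1))W_{m+n}+bW_{m+n+1}$, $W_m\circ L_n=0$, $W_m\circ W_n=0$, where $c\in\mathbb{C}$; (2) $L_m\circ L_n=cL_{m+n+1}-(n+1)L_{m+n}$, $L_m\circ W_n=((a-1)(m+1)-(n+1))W_{m+n}+(b+c)W_{m+n+1}$, $W_m\circ L_n=cW_{m+n+1}$, $W_m\circ W_n=0$, where $c\in\mathbb{C}\setminus\{0\}$; (3) $L_m\circ L_n=cL_{m+n+1}-(n+1)L_{m+n}$, $L_m\circ W_n=((a-2)(m+1)-(n+1))W_{m+n}+(b+c)W_{m+n+1}$, $W_m\circ L_n=-(n+1)W_{m+n}+cW_{m+n+1}$, $W_m\circ W_n=0$, where $c\in\mathbb{C}$. On $\mathfrak{g}_{1,b}$ for all $b\in\mathbb{C}$: (4) $L_m\circ L_n=2bL_{m+n+1}-(n+1)L_{m+n}$,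 $L_m\circ W_n=-(n+1)W_{m+n}+bW_{m+n+1}$, $W_m\circ L_n=0$, $W_m\circ W_n=k_1L_{m+n+1}$, where $k_1\neq0$. On $\mathfrak{g}_{1,b}$ with $b\neq0$: (5) $L_m\circ L_n=bL_{m+n+1}-(n+1)L_{m+n}$, $L_m\circ W_n=dL_{m+n+1}-(n+1)W_{m+n}+2bW_{m+n+1}$, $W_m\circ L_n=dL_{m+n+1}+bW_{m+n+1}$, $W_m\circ W_n=-\frac{d^2}{b}L_{m+n+1}-dW_{m+n+1}$, where $d\neq0$. On $\mathfrak{g}_{1,0}$: (6) $L_m\circ L_n=cL_{m+n+1}-(n+1)L_{m+n}$, $L_m\circ W_n=-(n+1)W_{m+n}$, $W_m\circ L_n=0$, $W_m\circ W_n=k_2W_{m+n+1}$, where $c\in\mathbb{C}$, $k_2\in\mathbb{C}\setminus\{0\}$; (7) $L_m\circ L_n=-(n+1)L_{m+n}$, $L_m\circ W_n=-(n+1)W_{m+n}$, $W_m\circ L_n=0$, $W_m\circ W_n=k_1L_{m+n+1}+k_2W_{m+n+1}$, where $k_1,k_2\in\mathbb{C}\setminus\{0\}$; (8) $L_m\circ L_n=cL_{m+n+1}-(n+1)L_{m+n}$, $L_m\circ W_n=h_1L_{m+n+1}-(n+1)W_{m+n}$, $W_m\circ L_n=h_1L_{m+n+1}$, $W_m\circ W_n=\frac{h_1(h_1-k_2)}{c}L_{m+n+1}+k_2W_{m+n+1}$, where $c,h_1\in\mathbb{C}\setminus\{0\}$, $k_2\in\mathbb{C}$; (9) $L_m\circ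 L_n=-(n+1)L_{m+n}$, $L_m\circ W_n=h_1L_{m+n+1}-(n+1)W_{m+n}$, $W_m\circ L_n=h_1L_{m+n+1}$, $W_m\circ W_n=k_1L_{m+n+1}+h_1W_{m+n+1}$, where $h_1,k_1\in\mathbb{C}\setminus\{0\}$; (10) $L_m\circ L_n=cL_{m+n+1}-(n+1)L_{m+n}$, $L_m\circ W_n=cW_{m+n+1}-(n+1)W_{m+n}$, $W_m\circ L_n=cW_{m+n+1}$, $W_m\circ W_n=k_1L_{m+n+1}+k_2W_{m+n+1}$, where $c\in\mathbb{C}\setminus\{0\}$, $(k_1,k_2)\in\mathbb{C}^2\setminus\{(0,0)\}$; (11) $L_m\circ L_n=cL_{m+n+1}-(n+1)L_{m+n}$, $L_m\circ W_n=-(m+n+2)W_{m+n}+cW_{m+n+1}$, $W_m\circ L_n=-(n+1)W_{m+n}+cW_{m+n+1}$, $W_m\circ W_n=k_2W_{m+n+1}$, where $c\in\mathbb{C}$, $k_2\in\mathbb{C}\setminus\{0\}$.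
   Context: A left-symmetric algebra is a vector space $A$ with a bilinear product $\circ$ satisfying $(x\circ y)\circ z-x\circ(y\circ z)=(y\circ x)\circ z-y\circ(x\circ z)$ for all $x,y,z\in A$. A compatible left-symmetric algebra structure on a Lie algebra $(\mathfrak{g},[\cdot,\cdot])$ is a left-symmetric product $\circ$ on the vector space $\mathfrak{g}$ such that $x\circ y-y\circ x=[x,y]$ for all $x,y\in\mathfrak{g}$. (The Lie algebra $\mathfrak{g}_{a,b}$ in the claim is the coefficient Lie algebra of the Lie conformal algebra $\mathcal{W}(a,b)$.) *)

From HB Require Import structures.
From mathcomp Require Import all_boot all_order all_algebra.
From mathcomp Require Import complex.
From mathcomp Require Import Rstruct.
From mathcomp Require Import finmap monalg.

Set Implicit Arguments.
Unset Strict Implicit.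
Unset Printing Implicit Defensive.

Import GRing.Theory.
Local Open Scope ring_scope.

Definition C : fieldType := Rdefinitions.R[i].

(* Index set of the basis: (false, i) <-> L_i, (true, i) <-> W_i. *)
Definition Idx : choiceType := (bool * int)%type.

Definition V : lmodType C := {malg C[Idx]}.

Definition L (i : int) : V := << (false, i) >>.
Definition W (i : int) : V := << (true, i) >>.

Definition bilin (f : Idx -> Idx -> V) (x y : V) : V :=
  \sum_(k <- msupp x) \sum_(l <- msupp y) (x@_k * y@_l) *: f k l.

Definition mk_table (LL LW WL WW : int -> int -> V) (k l : Idx) : V :=
  match k, l with
  | (false, m), (false, n) => LL m n
  | (false, m), (true, n)  => LW m n
  | (true, m),  (false, n) => WL m n
  | (true, m),  (true, n)  => WW m n
  end.

Definition mkprod (LL LW WL WW : int -> int -> V) : V -> V -> V :=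
  bilin (mk_table LL LW WL WW).

Definition brLW (a b : C) (m n : int) : V :=
  ((m + 1)%:~R * (a - 1) - (n + 1)%:~R) *: W (m + n) + b *: W (m + n + 1).

Definition gbracket (a b : C) : V -> V -> V :=
  mkprod (fun m n => (m - n)%:~R *: L (m + n))
         (fun m n => brLW a b m n)
         (fun n m => - brLW a b m n)
         (fun _ _ => 0).

Definition compatible_LSA (br : V -> V -> V) (prod : V -> V -> V) : Prop :=
  [/\ (forall (x : V) (c : C) (u v : V),
          prod x (c *: u + v) = c *: prod x u + prod x v),
      (forall (y : V) (c : C) (u v : V),
          prod (c *: u + v) y = c *: prod u y + prod v y),
      (forall x y z : V,
          prod (prod x y) z - prod x (prod y z)
          = prod (prod y x) z - prod y (prod x z))
    & (forall x y : V, prod x y - prod y x = br x y)].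

(* Left-symmetry and the
   commutator identity are multilinear, so they only need to be checked on
   basis elements (and, by the symmetry of left-symmetry in its first two
   arguments, on ordered pairs of them).  On basis elements L_m, W_n, ... both
   sides are combinations of L_(s+d), W_(s+d) with s = m + n (+ p) and
   0 <= d <= 2; comparing coefficients leaves polynomial identities in m, n, p
   and the parameters, which [ring] (or [field]) decides. *)
From HB Require Import structures.
From mathcomp Require Import all_boot all_order all_algebra.
From mathcomp Require Import complex Rstruct finmap monalg.
From mathcomp Require Import ring zify.
Import GRing.Theory.
Local Open Scope ring_scope.

Section LinearFun.
Context {R : pzRingType} {U U' M : lmodType R}.

Lemma linear_comp {f : U' -> M} {g : U -> U'} : linear f -> linear g -> linear (f \o g).
Proof. by move=> lf lg a u v /=; rewrite lg lf. Qed.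

Lemma linearB_fun {f g : U -> M} : linear f -> linear g -> linear (f \- g).
Proof. by move=> lf lg a u v /=; rewrite lf lg scalerBr opprD addrACA. Qed.

Context {f : U -> M} (lf : linear f).

Lemma linear_fun0 : f 0 = 0.
Proof. by move: lf => /zmod_morphism_linear fB; rewrite -(subrr (0 : U)) fB subrr. Qed.

Lemma linear_funZ a : {morph f : u / a *: u}.
Proof. by move=> u; rewrite -[a *: u]addr0 lf linear_fun0 addr0. Qed.

Lemma linear_funD : {morph f : u v / u + v}.
Proof. by move=> u v; have := lf 1 u v; rewrite !scale1r. Qed.

Lemma linear_funN : {morph f : u / - u}.
Proof. by move=> u; rewrite -scaleN1r linear_funZ scaleN1r. Qed.

End LinearFun.

Section MalgLinearExtension.
Context {K : comNzRingType} {I : choiceType} {M : lmodType K}.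
Implicit Types (x : {malg K[I]}) (g : I -> M).

Definition malg_lext g x : M := \sum_(k <- msupp x) x@_k *: g k.

Lemma malg_lextEw g x (d : {fset I}) : (msupp x `<=` d)%fset ->
  malg_lext g x = \sum_(k <- d) x@_k *: g k.
Proof.
move=> le; rewrite /malg_lext [LHS](big_fset_incl _ le) => //= k _ /mcoeff_outdom ->.
by rewrite scale0r.
Qed.

Lemma malg_lext_is_linear g : linear (malg_lext g).
Proof.
move=> a x y; pose d := (msupp x `|` msupp y `|` msupp (a *: x + y))%fset.
rewrite !(@malg_lextEw _ _ d) ?fsubsetUr //; last 2 first.
- exact: fsubset_trans (fsubsetUr _ _) (fsubsetUl _ _).
- exact: fsubset_trans (fsubsetUl _ _) (fsubsetUl _ _).
rewrite scaler_sumr -big_split; apply: eq_bigr => k _ /=.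
by rewrite mcoeffD mcoeffZ scalerDl scalerA.
Qed.

Lemma malg_lextP (a : K) g1 g2 x :
  malg_lext (fun k => a *: g1 k + g2 k) x = a *: malg_lext g1 x + malg_lext g2 x.
Proof.
rewrite /malg_lext scaler_sumr -big_split; apply: eq_bigr => k _ /=.
by rewrite scalerDr !scalerA mulrC.
Qed.

Lemma malg_lextU g k : malg_lext g << k >> = g k.
Proof. by rewrite /malg_lext msuppU oner_eq0 big_seq_fset1 mcoeffUU scale1r. Qed.

Lemma monalgUZ (c : K) k : << c *g k >> = c *: << k >> :> {malg K[I]}.
Proof. by apply/malgP => l; rewrite mcoeffZ !mcoeffU mulr_natr. Qed.

Lemma eq_linear_malg (f h : {malg K[I]} -> M) : linear f -> linear h ->
  (forall k, f << k >> = h << k >>) -> f =1 h.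
Proof.
move=> lf lh eqfh x; rewrite (monalgE x).
elim: (msupp x : seq _) => [|k s IH]; first by rewrite big_nil !linear_fun0.
by rewrite big_cons monalgUZ lf lh eqfh IH.
Qed.

End MalgLinearExtension.

Section BasisReduction.
Context {K : comNzRingType} {I : choiceType}.
Local Notation A := {malg K[I]}.
Variable prod : A -> A -> A.
Hypotheses (prodl : forall y, linear (prod^~ y)) (prodr : forall x, linear (prod x)).

Definition associator x y z := prod (prod x y) z - prod x (prod y z).

Lemma associator_linear1 y z : linear (fun x => associator x y z).
Proof. exact: linearB_fun (linear_comp (prodl z) (prodl y)) (prodl _). Qed.

Lemma associator_linear2 x z : linear (fun y => associator x y z).
Proof.
exact: linearB_fun (linear_comp (prodl z) (prodr x)) (linear_comp (prodr x) (prodl z)).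
Qed.

Lemma associator_linear3 x y : linear (associator x y).
Proof. exact: linearB_fun (prodr _) (linear_comp (prodr x) (prodr y)). Qed.

Lemma left_symmetric_basis (r : rel I) : total r ->
  (forall k l q, r k l ->
     associator << k >> << l >> << q >> = associator << l >> << k >> << q >>) ->
  forall x y z, associator x y z = associator y x z.
Proof.
move=> r_total lsym_r.
have lsym_kl k l z : associator << k >> << l >> z = associator << l >> << k >> z.
  apply: eq_linear_malg (associator_linear3 _ _) (associator_linear3 _ _) _ z => q.
  by case/orP: (r_total k l) => /lsym_r // ->.
have lsym_k k y z : associator << k >> y z = associator y << k >> z.
  exact: eq_linear_malg (associator_linear2 _ _) (associator_linear1 _ _) (lsym_kl k ^~ z) y.
move=> x y z.
exact: eq_linear_malg (associator_linear1 _ _) (associator_linear2 _ _) (fun k => lsym_k k y z) x.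
Qed.

Variable br : A -> A -> A.
Hypotheses (brl : forall y, linear (br^~ y)) (brr : forall x, linear (br x)).

Lemma commutator_basis :
  (forall k l, prod << k >> << l >> - prod << l >> << k >> = br << k >> << l >>) ->
  forall x y, prod x y - prod y x = br x y.
Proof.
move=> comm_basis.
have comm_k k y : prod << k >> y - prod y << k >> = br << k >> y.
  exact: eq_linear_malg (linearB_fun (prodr _) (prodl _)) (brr _) (comm_basis k) y.
move=> x y.
exact: eq_linear_malg (linearB_fun (prodl _) (prodr _)) (brl _) (comm_k ^~ y) x.
Qed.

End BasisReduction.

Lemma bilinE f x y : bilin f x y = malg_lext (fun k => malg_lext (f k) y) x.
Proof.
apply: eq_bigr => k _; rewrite scaler_sumr.
by apply: eq_bigr => l _; rewrite scalerA.
Qed.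

Lemma bilin_linearl f y : linear (bilin f ^~ y).
Proof. by move=> a u v; rewrite !bilinE malg_lext_is_linear. Qed.

Lemma bilin_linearr f x : linear (bilin f x).
Proof.
move=> a u v; rewrite !bilinE -malg_lextP.
by apply: eq_bigr => k _; rewrite malg_lext_is_linear.
Qed.

Lemma bilinU f k l : bilin f << k >> << l >> = f k l.
Proof. by rewrite bilinE !malg_lextU. Qed.

Section Tables.
Variables LL LW WL WW : int -> int -> V.
Local Notation P := (mkprod LL LW WL WW).

Lemma mkprod_linearl y : linear (P^~ y). Proof. exact: bilin_linearl. Qed.
Lemma mkprod_linearr x : linear (P x). Proof. exact: bilin_linearr. Qed.

Lemma mkprod0l y : P 0 y = 0. Proof. exact: linear_fun0 (mkprod_linearl y). Qed.
Lemma mkprod0r x : P x 0 = 0. Proof. exact: linear_fun0 (mkprod_linearr x). Qed.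
Lemma mkprodDl u v y : P (u + v) y = P u y + P v y.
Proof. exact: linear_funD (mkprod_linearl y) u v. Qed.
Lemma mkprodDr x u v : P x (u + v) = P x u + P x v.
Proof. exact: linear_funD (mkprod_linearr x) u v. Qed.
Lemma mkprodZl a u y : P (a *: u) y = a *: P u y.
Proof. exact: linear_funZ (mkprod_linearl y) a u. Qed.
Lemma mkprodZr a x u : P x (a *: u) = a *: P x u.
Proof. exact: linear_funZ (mkprod_linearr x) a u. Qed.
Lemma mkprodNl u y : P (- u) y = - P u y.
Proof. exact: linear_funN (mkprod_linearl y) u. Qed.
Lemma mkprodNr x u : P x (- u) = - P x u.
Proof. exact: linear_funN (mkprod_linearr x) u. Qed.

Lemma mkprodLL m n : P (L m) (L n) = LL m n. Proof. exact: bilinU. Qed.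
Lemma mkprodLW m n : P (L m) (W n) = LW m n. Proof. exact: bilinU. Qed.
Lemma mkprodWL m n : P (W m) (L n) = WL m n. Proof. exact: bilinU. Qed.
Lemma mkprodWW m n : P (W m) (W n) = WW m n. Proof. exact: bilinU. Qed.

Lemma compatible_LSA_mkprod a b :
  (forall k l q, k.1 ==> l.1 ->
     associator P << k >> << l >> << q >> = associator P << l >> << k >> << q >>) ->
  (forall k l, P << k >> << l >> - P << l >> << k >> = gbracket a b << k >> << l >>) ->
  compatible_LSA (gbracket a b) P.
Proof.
move=> lsym comm; split; [exact: mkprod_linearr | exact: mkprod_linearl | |].
- apply: (left_symmetric_basis P mkprod_linearl mkprod_linearr _ _ lsym).
  by move=> [[] ?] [[] ?].
- exact: commutator_basis P mkprod_linearl mkprod_linearr _ (bilin_linearl _)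
    (bilin_linearr _) comm.
Qed.

End Tables.

Lemma LE i : L i = << (false, i) >>. Proof. by []. Qed.
Lemma WE i : W i = << (true, i) >>. Proof. by []. Qed.

Lemma mcoeff_L i u j : (L i)@_(u, j) = (~~ u && (i == j))%:R.
Proof. by rewrite mcoeffU xpair_eqE; case: u. Qed.

Lemma mcoeff_W i u j : (W i)@_(u, j) = (u && (i == j))%:R.
Proof. by rewrite mcoeffU xpair_eqE; case: u. Qed.

(* mcoeffD, mcoeffN, mcoeffZ and mcoeff0 specialised to V: rewriting with the
   generic versions makes unification unfold V and C at every attempted match. *)
Lemma mcoeffVD (x y : V) k : (x + y)@_k = x@_k + y@_k. Proof. exact: mcoeffD. Qed.
Lemma mcoeffVN (x : V) k : (- x)@_k = - x@_k. Proof. exact: mcoeffN. Qed.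
Lemma mcoeffVZ (c : C) (x : V) k : (c *: x)@_k = c * x@_k. Proof. exact: mcoeffZ. Qed.
Lemma mcoeffV0 k : (0 : V)@_k = 0. Proof. exact: mcoeff0. Qed.

Lemma addr_eq_shift (x s e : int) (d : nat) :
  x = s + d%:Z -> (x == s + e) = (e == d%:Z).
Proof. by move=> ->; rewrite (inj_eq (addrI s)) eq_sym. Qed.

(* Generalizing over mkprod, L and W, keeping only the rewrite rules needed,
   stops unification from unfolding them: this is what keeps the rewriting fast. *)
Ltac expand_on_basis :=
  rewrite -?LE -?WE /associator ?/gbracket ?/brLW;
  move: mkprodLL mkprodLW mkprodWL mkprodWW mkprodDl mkprodDr mkprodZl mkprodZr
        mkprodNl mkprodNr mkprod0l mkprod0r mcoeff_L mcoeff_W;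
  move: mkprod L W;
  let P := fresh "P" in let eL := fresh "eL" in let eW := fresh "eW" in
  let PLL := fresh in let PLW := fresh in let PWL := fresh in let PWW := fresh in
  let PDl := fresh in let PDr := fresh in let PZl := fresh in let PZr := fresh in
  let PNl := fresh in let PNr := fresh in let P0l := fresh in let P0r := fresh in
  let cL := fresh in let cW := fresh in let t := fresh "t" in let j := fresh "j" in
  intros P eL eW PLL PLW PWL PWW PDl PDr PZl PZr PNl PNr P0l P0r cL cW;
  repeat first [ erewrite PLL | erewrite PLW | erewrite PWL | erewrite PWW ];
  repeat first [ erewrite PZl | erewrite PZr | erewrite PDl | erewrite PDr
               | erewrite PNl | erewrite PNr | erewrite P0l | erewrite P0r ];
  repeat first [ erewrite PLL | erewrite PLW | erewrite PWL | erewrite PWW ];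
  apply/malgP; intros [t j];
  repeat first [ erewrite mcoeffVD | erewrite mcoeffVZ | erewrite mcoeffVN
               | erewrite mcoeffV0 ];
  repeat first [ erewrite cL | erewrite cW ];
  clear P eL eW PLL PLW PWL PWW PDl PDr PZl PZr PNl PNr P0l P0r cL cW; move: t j.

(* Indices are sums of m, n, p and literal 1s; shift_of counts the 1s. *)
Ltac shift_of x :=
  lazymatch x with
  | @Algebra.add _ ?a ?b =>
      let da := shift_of a in let db := shift_of b in constr:((da + db)%N)
  | @GRing.one _ => constr:(1%N)
  | _ => constr:(0%N)
  end.

Ltac normalize_shifts s e :=
  repeat match goal with
  | |- context [(?x == s + e)] =>
      let d := shift_of x in let d := eval cbv in d in
      rewrite (@addr_eq_shift x s e d ltac:(lia))
  end.

Ltac split_shift e :=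
  case: (eqVneq e 0%:Z) => [?|?]; [subst e|case: (eqVneq e 1%:Z) => [?|?];
    [subst e|case: (eqVneq e 2%:Z) => [?|?]; [subst e|
      repeat match goal with H : is_true (e != _) |- _ => rewrite (negbTE H); clear H end]]].

Ltac compare_coefficients s :=
  let j := fresh "j" in let e := fresh "e" in
  case; intros j; rewrite /=; try rewrite -(subrKC s j); move: (j - s) => e;
  normalize_shifts s e; split_shift e; rewrite ?eqz_nat /=; first [ring | field; done].

Ltac solve_compatible_LSA :=
  let m := fresh "m" in let n := fresh "n" in let p := fresh "p" in
  let hst := fresh in
  apply: compatible_LSA_mkprod;
  [ move=> [[] m] [[] n] [[] p] hst; try discriminate hst; clear hst;
    expand_on_basis; compare_coefficients (m + n + p)
  | move=> [[] m] [[] n]; expand_on_basis; compare_coefficients (m + n) ].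

Theorem corollary3p8 :
  (* (1) on g_{a,b}, all a b *)
  (forall a b c : C,
     compatible_LSA (gbracket a b)
       (mkprod (fun m n => c *: L (m + n + 1) - (n + 1)%:~R *: L (m + n))
               (fun m n => ((a - 1) * (m + 1)%:~R - (n + 1)%:~R) *: W (m + n)
                           + b *: W (m + n + 1))
               (fun m n => 0)
               (fun m n => 0))) /\
  (* (2) *)
  (forall a b c : C, c != 0 ->
     compatible_LSA (gbracket a b)
       (mkprod (fun m n => c *: L (m + n + 1) - (n + 1)%:~R *: L (m + n))
               (fun m n => ((a - 1) * (m + 1)%:~R - (n + 1)%:~R) *: W (m + n)
                           + (b + c) *: W (m + n + 1))
               (fun m n => c *: W (m + n + 1))
               (fun m n => 0))) /\
  (* (3) *)
  (forall a b c : C,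
     compatible_LSA (gbracket a b)
       (mkprod (fun m n => c *: L (m + n + 1) - (n + 1)%:~R *: L (m + n))
               (fun m n => ((a - 2) * (m + 1)%:~R - (n + 1)%:~R) *: W (m + n)
                           + (b + c) *: W (m + n + 1))
               (fun m n => - (n + 1)%:~R *: W (m + n) + c *: W (m + n + 1))
               (fun m n => 0))) /\
  (* (4) on g_{1,b}, all b *)
  (forall b k1 : C, k1 != 0 ->
     compatible_LSA (gbracket 1 b)
       (mkprod (fun m n => (2 * b) *: L (m + n + 1) - (n + 1)%:~R *: L (m + n))
               (fun m n => - (n + 1)%:~R *: W (m + n) + b *: W (m + n + 1))
               (fun m n => 0)
               (fun m n => k1 *: L (m + n + 1)))) /\
  (* (5) on g_{1,b}, b <> 0 *)
  (forall b d : C, b != 0 -> d != 0 ->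
     compatible_LSA (gbracket 1 b)
       (mkprod (fun m n => b *: L (m + n + 1) - (n + 1)%:~R *: L (m + n))
               (fun m n => d *: L (m + n + 1) - (n + 1)%:~R *: W (m + n)
                           + (2 * b) *: W (m + n + 1))
               (fun m n => d *: L (m + n + 1) + b *: W (m + n + 1))
               (fun m n => - (d ^+ 2 / b) *: L (m + n + 1)
                           - d *: W (m + n + 1)))) /\
  (* (6) on g_{1,0} *)
  (forall c k2 : C, k2 != 0 ->
     compatible_LSA (gbracket 1 0)
       (mkprod (fun m n => c *: L (m + n + 1) - (n + 1)%:~R *: L (m + n))
               (fun m n => - (n + 1)%:~R *: W (m + n))
               (fun m n => 0)
               (fun m n => k2 *: W (m + n + 1)))) /\
  (* (7) *)
  (forall k1 k2 : C, k1 != 0 -> k2 != 0 ->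
     compatible_LSA (gbracket 1 0)
       (mkprod (fun m n => - (n + 1)%:~R *: L (m + n))
               (fun m n => - (n + 1)%:~R *: W (m + n))
               (fun m n => 0)
               (fun m n => k1 *: L (m + n + 1) + k2 *: W (m + n + 1)))) /\
  (* (8) *)
  (forall c h1 k2 : C, c != 0 -> h1 != 0 ->
     compatible_LSA (gbracket 1 0)
       (mkprod (fun m n => c *: L (m + n + 1) - (n + 1)%:~R *: L (m + n))
               (fun m n => h1 *: L (m + n + 1) - (n + 1)%:~R *: W (m + n))
               (fun m n => h1 *: L (m + n + 1))
               (fun m n => (h1 * (h1 - k2) / c) *: L (m + n + 1)
                           + k2 *: W (m + n + 1)))) /\
  (* (9) *)
  (forall h1 k1 : C, h1 != 0 -> k1 != 0 ->
     compatible_LSA (gbracket 1 0)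
       (mkprod (fun m n => - (n + 1)%:~R *: L (m + n))
               (fun m n => h1 *: L (m + n + 1) - (n + 1)%:~R *: W (m + n))
               (fun m n => h1 *: L (m + n + 1))
               (fun m n => k1 *: L (m + n + 1) + h1 *: W (m + n + 1)))) /\
  (* (10) *)
  (forall c k1 k2 : C, c != 0 -> (k1, k2) != (0, 0) ->
     compatible_LSA (gbracket 1 0)
       (mkprod (fun m n => c *: L (m + n + 1) - (n + 1)%:~R *: L (m + n))
               (fun m n => c *: W (m + n + 1) - (n + 1)%:~R *: W (m + n))
               (fun m n => c *: W (m + n + 1))
               (fun m n => k1 *: L (m + n + 1) + k2 *: W (m + n + 1)))) /\
  (* (11) *)
  (forall c k2 : C, k2 != 0 ->
     compatible_LSA (gbracket 1 0)
       (mkprod (fun m n => c *: L (m + n + 1) - (n + 1)%:~R *: L (m + n))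
               (fun m n => - (m + n + 2)%:~R *: W (m + n) + c *: W (m + n + 1))
               (fun m n => - (n + 1)%:~R *: W (m + n) + c *: W (m + n + 1))
               (fun m n => k2 *: W (m + n + 1)))).
Proof.
(* Under [abstract] each case gets its own proof term, which makes compilation
   markedly faster. *)
do 10 (split; first by move=> *; abstract solve_compatible_LSA).
by move=> *; abstract solve_compatible_LSA.
Qed.
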